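(* Let $\Phi_1(t)=\sum_{k\ge0}\pi_k t^k$, where $\pi_k$ is the probability that a polynomial chosen uniformly at random among all $f\in\mathbb{F}_q[x]$ of degree at most $q-1$ with nonzero constant term has exactly $k$ zeroes in $\mathbb{F}_q$. Then \[ \Phi_1(t)=\left(1+\frac{t-1}{q}\right)^{q-1}. \]
   Context: $\mathbb{F}_q$ is the finite field with $q$ elements. *)

From mathcomp Require Import all_boot all_order all_algebra all_field.
Set Implicit Arguments. Unset Strict Implicit. Unset Printing Implicit Defensive.
Import GRing.Theory Num.Theory.
Local Open Scope ring_scope.

(* F is a finite field; q := #|F|.  A polynomial of degree at most q-1 is
   encoded bijectively by its coefficient vector c : 'I_q -> F. *)
Definition poly_of_coefs (F : finFieldType) (c : {ffun 'I_#|F| -> F}) : {poly F} :=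
  \sum_(i < #|F|) c i *: 'X^i.

Definition sample_space (F : finFieldType) : {set {ffun 'I_#|F| -> F}} :=
  [set c | (poly_of_coefs c).[0] != 0].

Definition nzeros (F : finFieldType) (p : {poly F}) : nat :=
  #|[set x : F | root p x]|.

Definition pi_k (F : finFieldType) (k : nat) : rat :=
  #|[set c in sample_space F | nzeros (poly_of_coefs c) == k]|%:R
  / #|sample_space F|%:R.

(* Phi_1(t) = sum_k pi_k t^k ; pi_k = 0 for k > q, so the sum is finite *)
Definition Phi1 (F : finFieldType) : {poly rat} :=
  \sum_(k < #|F|.+1) pi_k F k *: 'X^k.

From mathcomp Require Import all_boot all_order all_algebra all_field ring.
Set Implicit Arguments. Unset Strict Implicit. Unset Printing Implicit Defensive.
Import GRing.Theory Num.Theory.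
Local Open Scope ring_scope.

(* Evaluating a polynomial of degree at most q - 1 at every point of F is a
   bijection onto all functions F -> F, since a nonzero such polynomial has
   fewer than q roots; it preserves the constant term p(0) and the zero set.
   A uniform polynomial with nonzero constant term is therefore a uniform
   function g with g(0) <> 0, whose values at the q - 1 nonzero points are
   independent and each vanishes with probability 1/q.  Summing over all g
   therefore factors as a product over the nonzero points, each contributing
   (t + q - 1)/q. *)

Lemma sum_card_fibers_scaleXn (R : nzRingType) (T : finType) (S : {set T})
    (f : T -> nat) (n : nat) :
  {in S, forall c, f c < n}%N ->
  \sum_(k < n) #|[set c in S | f c == k]|%:R *: ('X^k : {poly R})
    = \sum_(c in S) 'X^(f c).
Proof.
move=> f_lt; transitivity (\sum_(c in S) \sum_(k < n | k == f c :> nat) ('X^k : {poly R})).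
  rewrite (exchange_big_dep xpredT) //=; apply: eq_bigr => k _.
  rewrite (eq_bigl [in [set c in S | f c == k]]) ?sumr_const ?scaler_nat // => c.
  by rewrite !inE eq_sym.
by apply: eq_bigr => c Sc; rewrite big_ord1_eq f_lt.
Qed.

Section FunctionsMissingAPoint.
Variables (A B : finType) (a0 : A) (b0 : B) (R : comPzSemiRingType) (t : R).

Let weight (x : A) (y : B) : R :=
  if x == a0 then (y != b0)%:R else if y == b0 then t else 1.

Let prod_weight (g : {ffun A -> B}) :
  \prod_x weight x (g x) = if g a0 != b0 then t ^+ #|[set x | g x == b0]| else 0.
Proof.
rewrite (bigD1 a0) //= /weight eqxx; case: ifP => [ga0 | _]; last by rewrite mul0r.
rewrite mul1r (eq_bigr (fun x => if g x == b0 then t else 1)) => [|x /negbTE -> //].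
rewrite -big_mkcondr prodr_const; congr (_ ^+ _); apply: eq_card => x.
rewrite inE unfold_in /=.
by case: eqVneq => [-> | //]; rewrite (negbTE ga0).
Qed.

Let sum_weight (x : A) :
  \sum_y weight x y = if x == a0 then (#|B|.-1)%:R else t + (#|B|.-1)%:R.
Proof.
rewrite /weight -(cardC1 b0); case: eqP => _.
  rewrite -sumr_const [RHS]big_mkcond; apply: eq_bigr => y _.
  by rewrite inE; case: (y != b0).
rewrite (bigD1 b0) //= eqxx (eq_bigr (fun _ => 1)) => [|y /negbTE -> //].
by rewrite sumr_const.
Qed.

Lemma sum_ffun_exp_card_preimage :
  \sum_(g : {ffun A -> B} | g a0 != b0) t ^+ #|[set x | g x == b0]|
    = (#|B|.-1)%:R * (t + (#|B|.-1)%:R) ^+ #|A|.-1.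
Proof.
rewrite big_mkcond (eq_bigr _ (fun g _ => esym (prod_weight g))) -bigA_distr_bigA /=.
rewrite (bigD1 a0) //= sum_weight eqxx.
rewrite (eq_bigr (fun _ => t + (#|B|.-1)%:R)) => [|x /negbTE ax]; last first.
  by rewrite sum_weight ax.
by rewrite prodr_const cardC1.
Qed.

End FunctionsMissingAPoint.

Lemma poly_eq_on_finField (F : finFieldType) (p r : {poly F}) :
  (size p <= #|F|)%N -> (size r <= #|F|)%N -> (forall x, p.[x] = r.[x]) -> p = r.
Proof.
move=> szp szr pr; apply/eqP; rewrite -subr_eq0; apply: contraT => pr_neq0.
have := max_poly_roots pr_neq0 _ (enum_uniq F).
rewrite -cardE ltnNge (leq_trans (size_polyD _ _)) ?size_polyN ?geq_max ?szp //.
by apply; apply/allP => x _; rewrite /root hornerD hornerN pr subrr.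
Qed.

Section CoefficientVectors.
Variable F : finFieldType.
Local Notation q := #|F|.
Implicit Types c : {ffun 'I_q -> F}.

Lemma coef_poly_of_coefs c (i : 'I_q) : (poly_of_coefs c)`_i = c i.
Proof.
rewrite /poly_of_coefs coef_sum (bigD1 i) //= coefZ coefXn eqxx mulr1 big1 ?addr0 //.
by move=> j /negbTE ji; rewrite coefZ coefXn (inj_eq val_inj) eq_sym ji mulr0.
Qed.

Lemma size_poly_of_coefs c : (size (poly_of_coefs c) <= q)%N.
Proof.
apply: (leq_trans (size_sum _ _ _)); apply/bigmax_leqP => i _.
by rewrite (leq_trans (size_scale_leq _ _)) // size_polyXn.
Qed.

Definition values_of_coefs c : {ffun F -> F} := [ffun x => (poly_of_coefs c).[x]].

Lemma values_of_coefs_inj : injective values_of_coefs.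
Proof.
move=> c1 c2 /ffunP eq_val; apply/ffunP => i; rewrite -!coef_poly_of_coefs.
suff -> : poly_of_coefs c1 = poly_of_coefs c2 by [].
apply: poly_eq_on_finField; rewrite ?size_poly_of_coefs // => x.
by have := eq_val x; rewrite !ffunE.
Qed.

Lemma values_of_coefs_bij : bijective values_of_coefs.
Proof. by apply: (inj_card_bij values_of_coefs_inj); rewrite !card_ffun card_ord. Qed.

Lemma sum_sample_space_exp_nzeros (R : comPzSemiRingType) (t : R) :
  \sum_(c in sample_space F) t ^+ nzeros (poly_of_coefs c)
    = (q.-1)%:R * (t + (q.-1)%:R) ^+ q.-1.
Proof.
rewrite -(sum_ffun_exp_card_preimage 0 0 t) (reindex values_of_coefs).
  apply: eq_big => [c | c _]; first by rewrite inE ffunE.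
  by congr (_ ^+ _); apply: eq_card => x; rewrite !inE ffunE.
exact/onW_bij/values_of_coefs_bij.
Qed.

Lemma card_sample_space : #|sample_space F| = (q.-1 * q ^ q.-1)%N.
Proof.
have := sum_sample_space_exp_nzeros (1 : nat).
rewrite !natn natrDE natrXE (eq_bigr (fun _ => 1%N)) => [|c _]; last exact: expr1n.
by rewrite sum1_card add1n prednK // ltnW // card_finNzRing_gt1.
Qed.

Lemma Phi1E : Phi1 F
  = (#|sample_space F|%:R)^-1 *: \sum_(c in sample_space F) 'X^(nzeros (poly_of_coefs c)).
Proof.
rewrite -(@sum_card_fibers_scaleXn _ _ _ (fun c => nzeros (poly_of_coefs c)) q.+1).
  by rewrite scaler_sumr; apply: eq_bigr => k _; rewrite scalerA mulrC.
by move=> c _; rewrite ltnS max_card.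
Qed.

End CoefficientVectors.

Theorem lemma4p2 (F : finFieldType) :
  Phi1 F = (1 + ('X - 1) * ((#|F|%:R : rat)^-1)%:P) ^+ (#|F|.-1).
Proof.
rewrite Phi1E sum_sample_space_exp_nzeros card_sample_space.
case: #|F| (card_finNzRing_gt1 F) => [|[|m]] // _ /=.
set c := (m.+2%:R : rat)^-1.
have m1_neq0 : (m.+1%:R : rat) != 0 by rewrite pnatr_eq0.
have oneE : 1 = c%:P * (m.+1%:R + 1) :> {poly rat}.
  by rewrite natr1 -polyC_natr -polyCM mulVf ?pnatr_eq0.
have -> : 1 + ('X - 1) * c%:P = c%:P * ('X + m.+1%:R) by rewrite {1}oneE; ring.
rewrite exprMn -polyC_exp -mul_polyC mulrA -polyC_natr -polyCM; congr (_%:P * _).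
by rewrite natrM natrX invfM mulrAC mulVf // mul1r exprVn.
Qed.
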